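(* Let $L_1$ and $L_2$ be ladders in the triangular lattice with $n_1$ and $n_2$ vertices respectively, where $n_1>n_2>1$. Then $$2^{n_1-n_2}\,\tau(L_2)\ \le\ \tau(L_1)\ \le\ 3^{n_1-n_2}\,\tau(L_2).$$
   Context: The triangular lattice is the infinite planar graph whose vertices are the points $a(1,0)+b(1/2,\sqrt3/2)$, $a,b\in\mathbb Z$, with edges between points at distance 1. A ladder is the induced subgraph of the triangular lattice on the vertices of two consecutive segments lying on two adjacent parallel lattice lines, such that each endpoint of one segment is adjacent to an endpoint of the other segment. Equivalently, a ladder with $s$ vertices is isomorphic to the graph on $v_1,\dots,v_s$ with edges $v_iv_{i+1}$ and $v_iv_{i+2}$ (the square of a path). $\tau(H)$ denotes the number of spanning trees of $H$. *)

From mathcomp Require Import all_boot.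
Set Implicit Arguments. Unset Strict Implicit. Unset Printing Implicit Defensive.

(* A finite simple graph on a finType V is given by an adjacency relation
   (assumed symmetric and irreflexive by the graphs we use).  Edges are
   2-element subsets {x, y} of V with adj x y. *)
Definition edges (V : finType) (adj : rel V) : {set {set V}} :=
  [set [set x; y] | x in V, y in V & adj x y].

Definition sub_adj (V : finType) (T : {set {set V}}) : rel V :=
  fun x y => (x != y) && ([set x; y] \in T).

Definition connected_edges (V : finType) (T : {set {set V}}) : bool :=
  [forall x, forall y, connect (sub_adj T) x y].

(* (V, T) is a tree: connected and minimally connected (every edge is
   needed, i.e. removing any edge disconnects the graph), equivalently
   connected and acyclic. *)
Definition is_tree (V : finType) (T : {set {set V}}) : bool :=
  connected_edges T && [forall e in T, ~~ connected_edges (T :\ e)].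

Definition is_spanning_tree (V : finType) (adj : rel V) (T : {set {set V}}) : bool :=
  (T \subset edges adj) && is_tree T.

Definition tau (V : finType) (adj : rel V) : nat :=
  #|[set T : {set {set V}} | is_spanning_tree adj T]|.

(* The ladder with s vertices: the square of the path v_0 ... v_{s-1},
   i.e. v_i v_j adjacent iff |i - j| is 1 or 2. *)
Definition ladder_adj (s : nat) : rel 'I_s :=
  fun i j => [|| i.+1 == j :> nat, j.+1 == i :> nat,
                 i.+2 == j :> nat | j.+2 == i :> nat].
Arguments ladder_adj s : clear implicits.

From mathcomp Require Import all_boot zify.
Set Implicit Arguments. Unset Strict Implicit. Unset Printing Implicit Defensive.

(* The ladder L_(n+1) is L_n plus a vertex v joined to the last two vertices
   a, b of L_n, which are themselves adjacent.  A spanning tree of L_n extends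
   to one of L_(n+1) by adding either va or vb, and different choices give
   different trees, so tau(L_(n+1)) >= 2 tau(L_n).  Conversely, deleting v from
   a spanning tree of L_(n+1) leaves a spanning tree of L_n when v is a leaf
   (two cases, told apart by the edge at v), and when both va and vb are used
   it leaves one after adding ab (the contraction of vb).  This encoding is
   injective, so tau(L_(n+1)) <= 3 tau(L_n); the theorem follows by iteration. *)

Lemma homo_connect (A B : finType) (f : A -> B) (e1 : rel A) (e2 : rel B) :
  (forall x y, e1 x y -> connect e2 (f x) (f y)) ->
  forall x y, connect e1 x y -> connect e2 (f x) (f y).
Proof.
move=> H x y /connectP [p pth ->]; elim: p x pth => [|z p IH] x /=.
  by rewrite connect0.
by case/andP => exz pz; apply: connect_trans (H _ _ exz) (IH _ pz).
Qed.

Lemma connect_sink (A : finType) (e : rel A) x y :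
  (forall z, ~~ e x z) -> connect e x y -> x = y.
Proof.
move=> H /connectP [[|z p] /= pth ->] //.
by case/andP: pth => exz; rewrite (negbTE (H z)) in exz.
Qed.

Section SpanningSubgraphs.

Variable V : finType.
Implicit Types (adj : rel V) (T S : {set {set V}}) (x y z : V).

Lemma set2C x y : [set x; y] = [set y; x].
Proof. exact: setUC. Qed.

Lemma eq_set2 x y x' y' :
  [set x; y] = [set x'; y'] -> (x = x' /\ y = y') \/ (x = y' /\ y = x').
Proof.
move=> E.
have hx : x \in [set x'; y'] by rewrite -E set21.
have hy : y \in [set x'; y'] by rewrite -E set22.
have hx' : x' \in [set x; y] by rewrite E set21.
have hy' : y' \in [set x; y] by rewrite E set22.
move: hx hy hx' hy'; rewrite !inE.
by do 4 (case/orP => /eqP ?); subst; auto.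
Qed.

Lemma eq_set2r x y z : x != y -> ([set x; y] == [set x; z]) = (y == z).
Proof.
move=> xy; apply/eqP/eqP => [/eq_set2 [[_ ->] //|[_ yx]] | -> //].
by rewrite yx eqxx in xy.
Qed.

Lemma sub_adj_sym T : symmetric (sub_adj T).
Proof. by move=> x y; rewrite /sub_adj eq_sym set2C. Qed.

Lemma sub_adjD T e x y :
  sub_adj (T :\ e) x y = sub_adj T x y && ([set x; y] != e).
Proof. by rewrite /sub_adj !inE; case: (_ != e); rewrite ?andbT ?andbF. Qed.

Lemma sub_adjU T S x y : sub_adj (T :|: S) x y = sub_adj T x y || sub_adj S x y.
Proof. by rewrite /sub_adj inE andb_orr. Qed.

Lemma sub_adj1 (e : {set V}) x y :
  sub_adj [set e] x y = (x != y) && ([set x; y] == e).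
Proof. by rewrite /sub_adj inE. Qed.

Lemma connected_edgesP T :
  reflect (forall x y, connect (sub_adj T) x y) (connected_edges T).
Proof.
by apply: (iffP forallP) => [H x y | H x]; [exact: (forallP (H x) y) | exact/forallP].
Qed.

Lemma connected_edges_to T r :
  (forall x, connect (sub_adj T) x r) -> connected_edges T.
Proof.
move=> H; apply/connected_edgesP => x y; apply: connect_trans (H x) _.
by rewrite (sym_connect_sym (@sub_adj_sym T)).
Qed.

Lemma spanning_treeP adj T :
  reflect [/\ T \subset edges adj, connected_edges T
            & {in T, forall e, ~~ connected_edges (T :\ e)}]
          (is_spanning_tree adj T).
Proof.
apply: (iffP and3P) => [[sT cT /forall_inP mT] | [sT cT mT]]; split => //.
exact/forall_inP.
Qed.

Lemma mem_edges adj x y : adj x y -> [set x; y] \in edges adj.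
Proof. by move=> a; apply/imset2P; exists x y; rewrite ?inE. Qed.

Lemma edges_sub_adj adj T x y :
  symmetric adj -> T \subset edges adj -> sub_adj T x y -> adj x y.
Proof.
move=> sy sT /andP [_ /(subsetP sT)] /imset2P [x' y' _].
by rewrite inE => a /eq_set2 [[-> ->]|[-> ->]] //; rewrite sy.
Qed.

Lemma edgesP adj T e :
  irreflexive adj -> T \subset edges adj -> e \in T ->
  exists x y, e = [set x; y] /\ sub_adj T x y.
Proof.
move=> ir sT eT; case/imset2P: (subsetP sT _ eT) => x y _; rewrite inE => a ee.
exists x, y; split => //; rewrite /sub_adj -ee eT andbT.
by apply: contraTneq a => ->; rewrite ir.
Qed.

Lemma eq_sub_adj_edges adj T S :
  irreflexive adj -> T \subset edges adj -> S \subset edges adj ->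
  sub_adj T =2 sub_adj S -> T = S.
Proof.
move=> ir sT sS H; apply/setP => e; apply/idP/idP => he.
  by have [x [y [-> h]]] := edgesP ir sT he; move: h; rewrite H => /andP[].
by have [x [y [-> h]]] := edgesP ir sS he; move: h; rewrite -H => /andP[].
Qed.

End SpanningSubgraphs.

Section DeleteLastVertex.

Variables (n : nat) (adj : rel 'I_n.+1) (sub : rel 'I_n).
Hypotheses (adj_sym : symmetric adj) (adj_irr : irreflexive adj).
Hypothesis adj_lift : forall x y, adj (lift ord_max x) (lift ord_max y) = sub x y.

Local Notation v := (@ord_max n).
Local Notation w := (lift (@ord_max n)).

Implicit Types (T : {set {set 'I_n}}) (U : {set {set 'I_n.+1}}).

Lemma sub_sym : symmetric sub.
Proof. by move=> x y; rewrite -!adj_lift adj_sym. Qed.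

Lemma sub_irr : irreflexive sub.
Proof. by move=> x; rewrite -adj_lift adj_irr. Qed.

Lemma lift_neq_max x : (w x == v) = false.
Proof. by rewrite eq_sym (negbTE (neq_lift _ _)). Qed.

Lemma lift_set2 x y : w @: [set x; y] = [set w x; w y].
Proof. by rewrite imsetU1 imset_set1. Qed.

Lemma max_notin_lift (e : {set 'I_n}) : v \notin w @: e.
Proof. by apply/imsetP => [[x _]] /esym/eqP; rewrite lift_neq_max. Qed.

Lemma set2_max_neq_lift (e : {set 'I_n}) u : [set v; u] != w @: e.
Proof. by apply: contraNneq (max_notin_lift e) => <-; rewrite set21. Qed.

Lemma set2_lift_neq (e : {set 'I_n}) x y :
  ([set w x; w y] != w @: e) = ([set x; y] != e).
Proof. by rewrite -lift_set2 (inj_eq (imset_inj (@lift_inj _ ord_max))). Qed.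

Lemma set2_max_lift u x y : ([set v; u] == [set w x; w y]) = false.
Proof. by rewrite -lift_set2; apply/negbTE/set2_max_neq_lift. Qed.

Definition lift_edges T : {set {set 'I_n.+1}} := [set w @: e | e : {set 'I_n} in T].

Definition restrict_edges U : {set {set 'I_n}} := [set e : {set 'I_n} | w @: e \in U].

(* Identifies the last vertex with [c]; projects paths onto the smaller graph. *)
Definition collapse (c : 'I_n) (u : 'I_n.+1) : 'I_n := odflt c (unlift ord_max u).

Lemma collapse_lift c x : collapse c (w x) = x.
Proof. by rewrite /collapse liftK. Qed.

Lemma collapse_max c : collapse c v = c.
Proof. by rewrite /collapse unlift_none. Qed.

Lemma sub_adj_lift_edges T x y : sub_adj (lift_edges T) (w x) (w y) = sub_adj T x y.
Proof.
rewrite /sub_adj (inj_eq (@lift_inj _ ord_max)) -lift_set2 mem_imset //.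
exact: imset_inj (@lift_inj _ ord_max).
Qed.

Lemma sub_adj_lift_edges_max T u : sub_adj (lift_edges T) v u = false.
Proof.
apply/negbTE/negP => /andP [_ /imsetP [e _ /eqP]].
by rewrite (negbTE (set2_max_neq_lift _ _)).
Qed.

Lemma sub_adj_restrict_edges U x y :
  sub_adj (restrict_edges U) x y = sub_adj U (w x) (w y).
Proof. by rewrite /sub_adj inE lift_set2 (inj_eq (@lift_inj _ ord_max)). Qed.

Definition add_pendant T c := lift_edges T :|: [set [set v; w c]].

Lemma sub_adj_add_pendant_lift T c x y :
  sub_adj (add_pendant T c) (w x) (w y) = sub_adj T x y.
Proof.
rewrite sub_adjU sub_adj_lift_edges sub_adj1 (eq_sym [set w x; w y]).
by rewrite set2_max_lift andbF orbF.
Qed.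

Lemma sub_adj_add_pendant_max T c u : sub_adj (add_pendant T c) v u = (u == w c).
Proof.
rewrite sub_adjU sub_adj_lift_edges_max sub_adj1 /=.
case: (unliftP ord_max u) => [x ->|->]; last by rewrite eqxx /= eq_sym lift_neq_max.
by rewrite eq_set2r ?(eq_sym v) ?lift_neq_max.
Qed.

Lemma add_pendant_spanning T c :
  adj v (w c) -> is_spanning_tree sub T -> is_spanning_tree adj (add_pendant T c).
Proof.
move=> vc /spanning_treeP [sT cT mT]; apply/spanning_treeP; split.
- apply/subsetP => _ /setUP [/imsetP [e eT ->] | /set1P ->]; last exact: mem_edges.
  have [x [y [-> sxy]]] := edgesP sub_irr sT eT.
  by rewrite lift_set2; apply: mem_edges; rewrite adj_lift (edges_sub_adj sub_sym sT).
- apply: (connected_edges_to (r := w c)) => u.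
  case: (unliftP ord_max u) => [x ->|->]; last by rewrite connect1 ?sub_adj_add_pendant_max.
  apply: homo_connect (connected_edgesP _ cT x c) => x' y' h.
  by rewrite connect1 ?sub_adj_add_pendant_lift.
move=> _ /setUP [/imsetP [e eT ->] | /set1P ->]; apply/negP => /connected_edgesP con.
  have /negP := mT e eT; apply; apply/connected_edgesP => x y.
  suff: connect (sub_adj (T :\ e)) (collapse c (w x)) (collapse c (w y)).
    by rewrite !collapse_lift.
  apply: homo_connect (con (w x) (w y)) => u u'; rewrite sub_adjD.
  case: (unliftP ord_max u) => [x' ->|->]; last first.
    rewrite sub_adj_add_pendant_max => /andP [/eqP -> _].
    by rewrite collapse_max collapse_lift.
  case: (unliftP ord_max u') => [y' ->|->]; last first.
    rewrite sub_adj_sym sub_adj_add_pendant_max => /andP [/eqP -> _].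
    by rewrite collapse_max collapse_lift.
  rewrite sub_adj_add_pendant_lift set2_lift_neq !collapse_lift => h.
  by rewrite connect1 // sub_adjD.
suff: v = w c by move/eqP; rewrite eq_sym lift_neq_max.
apply: connect_sink (con v (w c)) => z; rewrite sub_adjD sub_adj_add_pendant_max.
by case: (eqVneq z (w c)) => [->|]; rewrite ?eqxx.
Qed.

Lemma tau_delete_vertex_lower : #|[set c | adj v (w c)]| * tau sub <= tau adj.
Proof.
pose ext (p : 'I_n * {set {set 'I_n}}) := add_pendant p.2 p.1.
have ext_inj : {in setX [set c | adj v (w c)] [set T | is_spanning_tree sub T] &,
                 injective ext}.
  move=> [c1 T1] [c2 T2]; rewrite !inE /= => /andP [_ /spanning_treeP [s1 _ _]].
  move=> /andP [_ /spanning_treeP [s2 _ _]]; rewrite /ext /= => eq12.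
  have -> : T1 = T2.
    apply: (eq_sub_adj_edges sub_irr s1 s2) => x y.
    by rewrite -(sub_adj_add_pendant_lift T1 c1) eq12 sub_adj_add_pendant_lift.
  have := congr1 (fun U => sub_adj U v (w c1)) eq12.
  by rewrite /= !sub_adj_add_pendant_max eqxx (inj_eq (@lift_inj _ ord_max)) => /esym/eqP ->.
rewrite /tau -cardsX -(card_in_imset ext_inj); apply: subset_leq_card.
apply/subsetP => _ /imsetP [[c T] /setXP [vc tT] ->].
by rewrite !inE in vc tT *; apply: add_pendant_spanning.
Qed.

Lemma restrict_edgesP U e :
  U \subset edges adj -> e \in restrict_edges U ->
  exists x y, e = [set x; y] /\ sub_adj U (w x) (w y).
Proof.
move=> sU; rewrite inE => he.
have [u [u' [ee su]]] := edgesP adj_irr sU he.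
have hu : u \in w @: e by rewrite ee set21.
have hu' : u' \in w @: e by rewrite ee set22.
case: (unliftP ord_max u) ee hu su => [x ->|->]; last by rewrite (negbTE (max_notin_lift e)).
case: (unliftP ord_max u') hu' => [y ->|->]; last by rewrite (negbTE (max_notin_lift e)).
move=> _ ee _ sxy; exists x, y; split => //.
by apply: (imset_inj (@lift_inj _ ord_max)); rewrite lift_set2 ee.
Qed.

Lemma restrict_edges_sub U : U \subset edges adj -> restrict_edges U \subset edges sub.
Proof.
move=> sU; apply/subsetP => e he; have [x [y [-> sxy]]] := restrict_edgesP sU he.
by apply: mem_edges; rewrite -adj_lift (edges_sub_adj adj_sym sU sxy).
Qed.

Lemma max_has_nbr U : 0 < n -> connected_edges U -> exists u, sub_adj U v u.
Proof.
move=> n_gt0 /connected_edgesP cU.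
have /connectP [[|u p] /= pth eq] := cU v (w (Ordinal n_gt0)).
  by move/eqP: eq; rewrite lift_neq_max.
by case/andP: pth => h _; exists u.
Qed.

Lemma restrict_leaf_spanning U c :
  is_spanning_tree adj U -> sub_adj U v (w c) ->
  (forall u, sub_adj U v u -> u = w c) ->
  is_spanning_tree sub (restrict_edges U).
Proof.
move=> /spanning_treeP [sU /connected_edgesP cU mU] vc leaf.
apply/spanning_treeP; split; first exact: restrict_edges_sub.
  apply: (connected_edges_to (r := c)) => x.
  suff: connect (sub_adj (restrict_edges U)) (collapse c (w x)) (collapse c (w c)).
    by rewrite !collapse_lift.
  apply: homo_connect (cU (w x) (w c)) => u u'.
  case: (unliftP ord_max u) => [x' ->|->]; last first.
    by move/leaf => ->; rewrite collapse_max collapse_lift connect0.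
  case: (unliftP ord_max u') => [y' ->|->]; last first.
    by rewrite sub_adj_sym => /leaf ->; rewrite collapse_max collapse_lift connect0.
  by rewrite !collapse_lift -sub_adj_restrict_edges => /connect1.
move=> e; rewrite inE => he; apply/negP => /connected_edgesP con.
have /negP := mU _ he; apply; apply: (connected_edges_to (r := w c)) => u.
case: (unliftP ord_max u) => [x ->|->].
  apply: homo_connect (con x c) => x' y'.
  by rewrite sub_adjD sub_adj_restrict_edges -set2_lift_neq => h; rewrite connect1 ?sub_adjD.
by rewrite connect1 // sub_adjD vc set2_max_neq_lift.
Qed.

Variables a b : 'I_n.
Hypotheses (a_neq_b : a != b) (sub_ab : sub a b).
Hypothesis adj_max : forall z, adj v (w z) = (z == a) || (z == b).

Lemma max_nbr U u : U \subset edges adj -> sub_adj U v u -> u = w a \/ u = w b.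
Proof.
move=> sU /(edges_sub_adj adj_sym sU).
case: (unliftP ord_max u) => [x ->|->]; last by rewrite adj_irr.
by rewrite adj_max => /orP [] /eqP ->; [left | right].
Qed.

Lemma sub_adj_max_lift U z : U \subset edges adj ->
  sub_adj U v (w z) =
    ((z == a) && sub_adj U v (w a)) || ((z == b) && sub_adj U v (w b)).
Proof.
move=> sU; case: (eqVneq z a) => [->|za] /=; first by rewrite (negbTE a_neq_b) orbF.
case: (eqVneq z b) => [->|zb] //=; apply/negP => /(max_nbr sU) [] /lift_inj ez.
  by rewrite ez eqxx in za.
by rewrite ez eqxx in zb.
Qed.

Lemma max_nbr_a_or_b U : is_spanning_tree adj U -> sub_adj U v (w a) || sub_adj U v (w b).
Proof.
move=> /spanning_treeP [sU cU _].
have n_gt0 : 0 < n by case: n a => [[]|].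
have [u hu] := max_has_nbr n_gt0 cU.
by case: (max_nbr sU hu) => eu; rewrite -eu hu ?orbT.
Qed.

Lemma connect_ab_via_max U e :
  sub_adj U v (w a) -> sub_adj U v (w b) ->
  [set v; w a] != e -> [set v; w b] != e ->
  connect (sub_adj (U :\ e)) (w a) (w b).
Proof.
move=> va vb ae be; apply: (@connect_trans _ _ v); apply: connect1; rewrite sub_adjD.
  by rewrite sub_adj_sym va set2C.
by rewrite vb.
Qed.

(* If both edges at the last vertex are used, the edge [ab] would close a cycle. *)
Lemma ab_notin_restrict U :
  is_spanning_tree adj U -> sub_adj U v (w a) -> sub_adj U v (w b) ->
  [set a; b] \notin restrict_edges U.
Proof.
move=> /spanning_treeP [_ /connected_edgesP cU mU] va vb.
apply/negP; rewrite inE lift_set2 => hab.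
have /negP := mU _ hab; apply; apply/connected_edgesP => x y.
apply: (connect_sub _ (cU x y)) => u u' h.
have ab : connect (sub_adj (U :\ [set w a; w b])) (w a) (w b).
  by apply: connect_ab_via_max; rewrite ?set2_max_lift.
case: (eqVneq [set u; u'] [set w a; w b]) => [/eq_set2 [[-> ->]|[-> ->]] | ne] //.
  by rewrite (sym_connect_sym (@sub_adj_sym _ _)).
by rewrite connect1 // sub_adjD h ne.
Qed.

Definition restrict_ab U := [set a; b] |: restrict_edges U.

Lemma sub_adj_restrict_ab U x y :
  sub_adj (restrict_ab U) x y =
    sub_adj U (w x) (w y) || (x != y) && ([set x; y] == [set a; b]).
Proof. by rewrite sub_adjU sub_adj1 sub_adj_restrict_edges orbC. Qed.

Lemma restrict_ab_connected U :
  U \subset edges adj -> connected_edges U -> connected_edges (restrict_ab U).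
Proof.
move=> sU /connected_edgesP cU.
have ab x y : [set x; y] = [set a; b] -> connect (sub_adj (restrict_ab U)) x y.
  move=> /eq_set2 [[-> ->]|[-> ->]]; rewrite connect1 // sub_adj_restrict_ab.
    by rewrite a_neq_b eqxx orbT.
  by rewrite eq_sym a_neq_b set2C eqxx orbT.
apply: (connected_edges_to (r := a)) => x.
suff: connect (sub_adj (restrict_ab U)) (collapse a (w x)) (collapse a (w a)).
  by rewrite !collapse_lift.
apply: homo_connect (cU (w x) (w a)) => u u'.
case: (unliftP ord_max u) => [x' ->|->]; last first.
  by move=> /(max_nbr sU) [] ->; rewrite collapse_max collapse_lift ?connect0 ?ab.
case: (unliftP ord_max u') => [y' ->|->]; last first.
  rewrite sub_adj_sym => /(max_nbr sU) [] ->; rewrite collapse_max collapse_lift //.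
  by rewrite ab // set2C.
by rewrite !collapse_lift => h; rewrite connect1 // sub_adj_restrict_ab h.
Qed.

Lemma restrict_ab_minimal U :
  is_spanning_tree adj U -> sub_adj U v (w a) -> sub_adj U v (w b) ->
  {in restrict_ab U, forall e, ~~ connected_edges (restrict_ab U :\ e)}.
Proof.
move=> tU va vb; have ab_notin := ab_notin_restrict tU va vb.
move: tU => /spanning_treeP [_ _ mU] e; rewrite in_setU1.
case: (eqVneq e [set a; b]) => [-> _ | ne_ab /= he]; apply/negP => /connected_edgesP con.
  have /negP := mU [set v; w a] (proj2 (andP va)); apply.
  apply: (connected_edges_to (r := w b)) => u.
  case: (unliftP ord_max u) => [x ->|->]; last first.
    rewrite connect1 // sub_adjD vb eq_set2r ?(eq_sym v) ?lift_neq_max //=.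
    by rewrite (inj_eq (@lift_inj _ ord_max)) eq_sym a_neq_b.
  apply: homo_connect (con x b) => x' y'.
  rewrite /restrict_ab setU1K // sub_adj_restrict_edges => h.
  by rewrite connect1 // sub_adjD h eq_sym set2_max_lift.
have weU : w @: e \in U by rewrite inE in he.
have /negP := mU _ weU; apply.
apply: (connected_edges_to (r := w a)) => u.
case: (unliftP ord_max u) => [x ->|->]; last first.
  by rewrite connect1 // sub_adjD va set2_max_neq_lift.
have ab : connect (sub_adj (U :\ w @: e)) (w a) (w b).
  by apply: connect_ab_via_max; rewrite ?set2_max_neq_lift.
apply: homo_connect (con x a) => x' y'.
rewrite sub_adjD sub_adj_restrict_ab => /andP [/orP [h | /andP [_ /eqP eab]] ne].
  by rewrite connect1 // sub_adjD h set2_lift_neq.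
case/eq_set2: eab => [[-> ->] | [-> ->]] //.
by rewrite (sym_connect_sym (@sub_adj_sym _ _)).
Qed.

Lemma restrict_ab_spanning U :
  is_spanning_tree adj U -> sub_adj U v (w a) -> sub_adj U v (w b) ->
  is_spanning_tree sub (restrict_ab U).
Proof.
move=> tU va vb; have := restrict_ab_minimal tU va vb.
case/spanning_treeP: tU => sU cU _ mU; apply/spanning_treeP; split => //.
  apply/subsetP => e /setU1P [-> | he]; first exact: mem_edges.
  exact: (subsetP (restrict_edges_sub sU)).
exact: restrict_ab_connected.
Qed.

Lemma restrict_edges_max_inj U1 U2 :
  U1 \subset edges adj -> U2 \subset edges adj ->
  sub_adj U1 v (w a) = sub_adj U2 v (w a) -> sub_adj U1 v (w b) = sub_adj U2 v (w b) ->
  restrict_edges U1 = restrict_edges U2 -> U1 = U2.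
Proof.
move=> s1 s2 ea eb er; apply: (eq_sub_adj_edges adj_irr s1 s2) => u u'.
have max_eq z : sub_adj U1 v (w z) = sub_adj U2 v (w z).
  by rewrite (sub_adj_max_lift _ s1) (sub_adj_max_lift _ s2) ea eb.
case: (unliftP ord_max u) => [x ->|->]; case: (unliftP ord_max u') => [y ->|->] //.
- by rewrite -!sub_adj_restrict_edges er.
- by rewrite sub_adj_sym max_eq sub_adj_sym.
by rewrite /sub_adj eqxx.
Qed.

(* The flag records the edges used at the last vertex: [None] when both are,
   [Some true] when only the one to [a] is, [Some false] when only the one to [b]. *)
Definition restrict_code U : {set {set 'I_n}} * option bool :=
  if sub_adj U v (w a) && sub_adj U v (w b) then (restrict_ab U, None)
  else (restrict_edges U, Some (sub_adj U v (w a))).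

Lemma restrict_code_inj :
  {in [set U | is_spanning_tree adj U] &, injective restrict_code}.
Proof.
move=> U1 U2; rewrite !inE => t1 t2.
have /spanning_treeP [s1 _ _] := t1; have /spanning_treeP [s2 _ _] := t2.
move: (max_nbr_a_or_b t1) (max_nbr_a_or_b t2).
move: (ab_notin_restrict t1) (ab_notin_restrict t2); rewrite /restrict_code.
case A1: (sub_adj U1 v (w a)); case B1: (sub_adj U1 v (w b));
case A2: (sub_adj U2 v (w a)); case B2: (sub_adj U2 v (w b)) => //= n1 n2 _ _ [er];
apply: (restrict_edges_max_inj s1 s2); rewrite ?A1 ?B1 ?A2 ?B2 //.
move: er; rewrite /restrict_ab => er.
by rewrite -(setU1K (n1 isT isT)) -(setU1K (n2 isT isT)) er.
Qed.

Lemma tau_delete_vertex_upper : tau adj <= 3 * tau sub.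
Proof.
rewrite /tau -(card_in_imset restrict_code_inj).
have -> : 3 = #|[set: option bool]| by rewrite cardsT card_option card_bool.
rewrite mulnC -cardsX; apply: subset_leq_card.
apply/subsetP => _ /imsetP [U tU ->]; rewrite inE in tU.
have /spanning_treeP [sU _ _] := tU; have := max_nbr_a_or_b tU.
rewrite /restrict_code; case A: (sub_adj U v (w a)); case B: (sub_adj U v (w b)) => //= _;
  rewrite !inE ?andbT.
- exact: restrict_ab_spanning.
- apply: (restrict_leaf_spanning tU A) => u h.
  by case: (max_nbr sU h) => // eu; rewrite eu B in h.
- apply: (restrict_leaf_spanning tU B) => u h.
  by case: (max_nbr sU h) => // eu; rewrite eu A in h.
Qed.

End DeleteLastVertex.

Lemma ladder_adj_sym n : symmetric (ladder_adj n).
Proof.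
by move=> x y; rewrite /ladder_adj; do 4 case: (_ == _); rewrite ?orbT.
Qed.

Lemma ladder_adj_irr n : irreflexive (ladder_adj n).
Proof. by move=> x; rewrite /ladder_adj !(gtn_eqF (ltnSn _)) gtn_eqF. Qed.

Lemma ladder_adj_lift n (x y : 'I_n) :
  ladder_adj n.+1 (lift ord_max x) (lift ord_max y) = ladder_adj n x y.
Proof. by rewrite /ladder_adj !lift_max. Qed.

Lemma ladder_adj_max m (z : 'I_m.+2) :
  ladder_adj m.+3 ord_max (lift ord_max z) =
    (z == ord_max) || (z == Ordinal (leqnSn m.+1)).
Proof.
rewrite /ladder_adj lift_max -!(inj_eq val_inj) /=.
by case: z => k /= hk; apply/idP/idP; lia.
Qed.

Lemma tau_ladder_step n : 1 < n ->
  2 * tau (ladder_adj n) <= tau (ladder_adj n.+1) <= 3 * tau (ladder_adj n).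
Proof.
case: n => [|[|m]] // _.
have lift_adj := @ladder_adj_lift m.+2.
have max_adj := @ladder_adj_max m.
have ab_neq : ord_max != Ordinal (leqnSn m.+1) :> 'I_m.+2.
  by rewrite -(inj_eq val_inj) /= gtn_eqF.
apply/andP; split.
  have card_nbrs : #|[set c | ladder_adj m.+3 ord_max (lift ord_max c)]| = 2.
    rewrite -[2]/(true.+1) -ab_neq -cards2.
    by apply: eq_card => z; rewrite !inE max_adj.
  rewrite -card_nbrs.
  exact: tau_delete_vertex_lower (@ladder_adj_sym _) (@ladder_adj_irr _) lift_adj.
apply: (tau_delete_vertex_upper (@ladder_adj_sym _) (@ladder_adj_irr _) lift_adj
          ab_neq _ max_adj).
by rewrite /ladder_adj /= eqxx !orbT.
Qed.

Theorem mainTheorem10 (n1 n2 : nat) (h2 : 1 < n2) (h12 : n2 < n1) :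
  2 ^ (n1 - n2) * tau (ladder_adj n2) <= tau (ladder_adj n1)
  /\ tau (ladder_adj n1) <= 3 ^ (n1 - n2) * tau (ladder_adj n2).
Proof.
rewrite -(subnK (ltnW h12)); move: (n1 - n2) => k; rewrite addnK.
elim: k => [|k [IH1 IH2]]; first by rewrite !mul1n add0n.
have /andP [lower upper] := tau_ladder_step (ltn_addl k h2).
rewrite addSn !expnS -!mulnA; split.
  by apply: leq_trans lower; rewrite leq_mul2l.
by apply: leq_trans upper _; rewrite leq_mul2l.
Qed.
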